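(* Let $n$ be an even positive integer, $p$ a prime dividing $n$, and $p^a$ the largest power of $p$ dividing $n$. Suppose there is a prime $q$ with $q<n/2$ and $n-2q<p^a$. If there is a multiple $k$ of $p^a$ in the interval $[q,n/2]$, then $p$ is odd and $k=n/2$. *)

From mathcomp Require Import all_boot.

From mathcomp Require Import all_boot.

(* Both 2k and n are multiples of the p-part P of n, and
   0 <= n - 2k <= n - 2q < P, so 2k = n.  Then P divides n/2, which rules out
   p = 2 since P is the largest power of p dividing n. *)

Lemma eq_dvdn_sub_lt d m n : d %| m -> d %| n -> m <= n -> n - m < d -> m = n.
Proof.
move=> dm dn le_mn lt_nm_d; apply/eqP; rewrite eqn_leq le_mn /= -subn_eq0.
have := dvdn_sub dn dm; case: posnP => // nm_gt0.
by rewrite gtnNdvd.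
Qed.

Lemma pfactor_logn_dvdn_neq_mul {p n m} :
  prime p -> 0 < n -> p ^ logn p n %| m -> n != p * m.
Proof.
move=> p_pr n_gt0 pm; apply/eqP => n_pm.
have := ltnn (logn p n); rewrite -(pfactor_dvdn _ p_pr n_gt0) expnS {2}n_pm.
by rewrite dvdn_pmul2l ?prime_gt0 ?pm.
Qed.

Theorem mainTheorem19 (n p q k : nat) :
  0 < n -> ~~ odd n ->
  prime p -> p %| n ->
  prime q -> q < n %/ 2 -> n - 2 * q < p ^ logn p n ->
  p ^ logn p n %| k -> q <= k <= n %/ 2 ->
  odd p /\ k = n %/ 2.
Proof.
move=> n_gt0 _ p_pr _ _ _ gap Pk /andP[le_qk le_k_half].
have n_2k : 2 * k = n.
  apply: (@eq_dvdn_sub_lt (p ^ logn p n)) => //.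
  - exact: dvdn_mull.
  - exact: pfactor_dvdnn.
  - by rewrite mulnC -leq_divRL.
  - by apply: leq_ltn_trans gap; rewrite leq_sub2l // leq_mul2l le_qk orbT.
split; last by rewrite -n_2k mulKn.
have [p2 | //] := even_prime p_pr.
by move: (pfactor_logn_dvdn_neq_mul p_pr n_gt0 Pk); rewrite p2 n_2k eqxx.
Qed.
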